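(* Let $G=(V,E)$ be a finite, connected, bipartite cubic graph and $n>0$. For every $A\in\mathcal F(G)$ and every pair $x,y\in V$, the states $(A,x,x)$ and $(A,y,y)$ of $\mathcal R(G)$ intercommunicate under $P_{G,n}$: the chain started at $(A,x,x)$ reaches $(A,y,y)$ with positive probability, and vice versa.
   Context: $\mathcal F(G)=\{A\subseteq E: d_w(A)=2\text{ for all }w\in V\}$ (the 2-factors of $G$). Let $G=(V,E)$ be a finite, connected, bipartite cubic (3-regular) graph and $n>0$. For $A\subseteq E$ and $w\in V$ let $d_w(A)$ be the number of edges of $A$ incident to $w$, and let $\partial A$ be the set of vertices $w$ with $d_w(A)$ odd. Let $\mathcal R(G)$ be the set of ordered triples $(A,u,v)$ with $A\subseteq E$, $u,v\in V$, such that $\partial A=\{u,v\}$ if $u\ne v$ and $\partial A=\emptyset$ if $u=v$, $d_w(A)\ge1$ for all $w\in V$, and $d_u(A)+d_v(A)\ge4$. For $(A,u,v)\in\mathcal R(G)$ let $C_{uv}(A)$ be the connected component of $(V,A)$ containing $u$ (and $v$). Partition $\mathcal R(G)$ into: $\mathcal E$, the states where $C_{uv}(A)$ is a cycle (equivalently $u=v$); $\mathcal T$, where $C_{uv}(A)$ is a tadpole graph (a cycle with a path attached at one of its endpoints; equivalently $\{d_u(A),d_v(A)\}=\{1,3\}$); $\Theta$, where $C_{uv}(A)$ is a theta graph (two degree-3 vertices joined by three internally vertex-disjoint paths); $\mathcal D$, where $C_{uv}(A)$ is a dumbbell graph (two vertex-disjoint cycles joined by a path of length $\ge1$). An edge of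 $A$ is a bridge if deleting it from $(V,A)$ increases the number of connected components. $\triangle$ denotes symmetric difference. The Markov chain $P_{G,n}$ on $\mathcal R(G)$ is defined as follows: from the state $(A,u,v)$, for each edge $e=uu'\in E$ incident to $u$ it moves to $(A\triangle e,u',v)$, and for each edge $e=vv'\in E$ incident to $v$ it moves to $(A\triangle e,u,v')$, where such a move (along edge $e$ incident to the moved defect) has probability $1/2$ if $(A,u,v)\in\mathcal E\cup\mathcal T$ and $e\notin A$; $1/6$ if $(A,u,v)\in\Theta$; $n/(2(n+2))$ if $(A,u,v)\in\mathcal D$ and $e$ is a bridge of $(V,A)$; $1/(2(n+2))$ if $(A,u,v)\in\mathcal D$ and $e\in A$ is not a bridge; and $0$ otherwise. (If $u=v$, the two moves along the unique edge $e\notin A$ at $u$ lead to the distinct states $(A\cup e,u',u)$ and $(A\cup e,u,u')$.) All other transitions, including all identity transitions, have probability $0$. *)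

From HB Require Import structures.
From mathcomp Require Import all_boot all_order all_algebra.
Set Implicit Arguments. Unset Strict Implicit. Unset Printing Implicit Defensive.
Import Order.TTheory GRing.Theory Num.Theory.

Section Defs.
Variables (T : finType) (adj : rel T).

Definition edges : {set {set T}} := [set [set x; y] | x in T, y in T & adj x y].

Definition cubic : Prop := forall x : T, #|[set y | adj x y]| = 3.
Definition connected_graph : Prop := forall x y : T, connect adj x y.
Definition bipartite : Prop := exists c : T -> bool, forall x y, adj x y -> c x != c y.

Definition deg (A : {set {set T}}) (w : T) : nat := #|[set e in A | w \in e]|.
Definition bdry (A : {set {set T}}) : {set T} := [set w | odd (deg A w)].

Definition two_factor (A : {set {set T}}) : Prop :=
  A \subset edges /\ forall w, deg A w = 2.

Definition arel (A : {set {set T}}) : rel T := fun x y => (x != y) && ([set x; y] \in A).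

Definition ncomp (A : {set {set T}}) : nat := n_comp (arel A) T.

Definition bridge (A : {set {set T}}) (e : {set T}) : bool :=
  (e \in A) && (ncomp A < ncomp (A :\ e)).

Definition state := ({set {set T}} * T * T)%type.

Definition inR (s : state) : bool :=
  let: (A, u, v) := s in
  [&& A \subset edges,
      bdry A == (if u == v then set0 else [set u; v]),
      [forall w, 0 < deg A w] & 4 <= deg A u + deg A v].

Definition comp_has_bridge (A : {set {set T}}) (u : T) : bool :=
  [exists e in A, bridge A e && [exists w in e, connect (arel A) u w]].

Definition inET (s : state) : bool :=
  let: (A, u, v) := s in
  (u == v) || ((deg A u == 1) && (deg A v == 3)) || ((deg A u == 3) && (deg A v == 1)).
Definition inTheta (s : state) : bool :=
  let: (A, u, v) := s in
  [&& u != v, deg A u == 3, deg A v == 3 & ~~ comp_has_bridge A u].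
Definition inD (s : state) : bool :=
  let: (A, u, v) := s in
  [&& u != v, deg A u == 3, deg A v == 3 & comp_has_bridge A u].

Definition symdiff1 (A : {set {set T}}) (e : {set T}) : {set {set T}} :=
  if e \in A then A :\ e else e |: A.

(* probability of the move along edge e (incident to the moved defect) *)
Definition move_prob (R : realFieldType) (n : R) (s : state) (e : {set T}) : R :=
  (let: (A, u, v) := s in
  if inET s then (if e \notin A then 2^-1 else 0)
  else if inTheta s then 6^-1
  else if inD s then
    (if bridge A e then n / (2 * (n + 2))
     else if e \in A then (2 * (n + 2))^-1 else 0)
  else 0)%R.

Definition P (R : realFieldType) (n : R) (s t : state) : R :=
  (let: (A, u, v) := s in
  (\sum_(u' | adj u u')
      ((t == (symdiff1 A [set u; u'], u', v))%:R * move_prob n s [set u; u']))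
  + (\sum_(v' | adj v v')
      ((t == (symdiff1 A [set v; v'], u, v'))%:R * move_prob n s [set v; v'])))%R.

Definition step (R : realFieldType) (n : R) : rel state :=
  fun s t => [&& inR s, inR t & (0 < P n s t)%R].

End Defs.

From HB Require Import structures.
From mathcomp Require Import all_boot all_order all_algebra.
Import Order.TTheory GRing.Theory Num.Theory.
Set Implicit Arguments. Unset Strict Implicit. Unset Printing Implicit Defensive.

(* Since G is cubic and A is a 2-factor, every vertex w lies on exactly one
   edge ww' outside A.  Along such an edge the two defects of (A,x,x) travel
   together in two moves: adding xx' moves one defect to x', removing xx'
   moves the other one there.  Along an edge xz of A, with partners x' and z',
   six moves suffice: toggle xx', xz, zz', xx', xz, zz' in turn.  Composing
   these walks along a path of the connected graph G links (A,x,x) to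
   (A,y,y). *)

Section Degrees.
Variable T : finType.
Implicit Types (B : {set {set T}}) (e : {set T}) (w : T).

Lemma deg_setU1 B e w : e \notin B -> deg (e |: B) w = deg B w + (w \in e).
Proof.
move=> eB; rewrite /deg; case: (boolP (w \in e)) => we.
  have -> : [set e0 in e |: B | w \in e0] = e |: [set e0 in B | w \in e0].
    by apply/setP=> e0; rewrite !inE; case: eqP => // ->.
  by rewrite cardsU1 inE (negPf eB) addn1.
rewrite addn0; apply: eq_card => e0; rewrite !inE.
by case: eqP => // ->; rewrite (negPf we) !andbF.
Qed.

Lemma deg_setD1 B e w : e \in B -> deg (B :\ e) w = deg B w - (w \in e).
Proof. by move=> eB; rewrite -{2}(setD1K eB) deg_setU1 ?setD11 // addnK. Qed.

End Degrees.

Section RStates.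
Variables (T : finType) (adj : rel T).
Implicit Types (B : {set {set T}}) (u v w : T).

Lemma edge_in_edges u v : adj u v -> [set u; v] \in edges adj.
Proof. by move=> huv; apply/imset2P; exists u v; rewrite ?inE. Qed.

Lemma inR_diag B u : B \subset edges adj -> (forall w, deg B w = 2) -> inR adj (B, u, u).
Proof.
move=> sB dB; rewrite /inR eqxx sB !dB /= andbT; apply/andP; split.
  by apply/eqP/setP=> w; rewrite !inE dB.
by apply/forallP=> w; rewrite dB.
Qed.

Lemma inR_pair B u v du dv : u != v -> B \subset edges adj ->
  deg B u = du -> deg B v = dv -> (forall w, w != u -> w != v -> deg B w = 2) ->
  odd du -> odd dv -> 4 <= du + dv -> inR adj (B, u, v).
Proof.
move=> uv sB dBu dBv dB odd_u odd_v sum_uv.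
rewrite /inR (negPf uv) sB dBu dBv sum_uv andbT /=; apply/andP; split.
  apply/eqP/setP=> w; rewrite !inE.
  case: (eqVneq w u) => [->|wu]; first by rewrite dBu.
  by case: (eqVneq w v) => [->|wv]; rewrite ?dBv ?dB.
apply/forallP=> w; case: (eqVneq w u) => [->|wu]; first by rewrite dBu odd_gt0.
by case: (eqVneq w v) => [->|wv]; [rewrite dBv odd_gt0 | rewrite dB].
Qed.

End RStates.

Section Transitions.
Variables (T : finType) (adj : rel T) (R : realFieldType) (n : R).
Hypothesis n_pos : (0 < n)%R.
Implicit Types (B : {set {set T}}) (e : {set T}) (u v : T).
Local Open Scope ring_scope.

Let n2_gt0 : 0 < 2 * (n + 2) :> R.
Proof. by rewrite mulr_gt0 // addr_gt0. Qed.

Lemma move_prob_ge0 (s : state T) e : 0 <= move_prob n s e.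
Proof.
case: s => [[B u v]]; rewrite /move_prob.
by repeat case: ifP => _ //; rewrite ?invr_ge0 ?ler0n // ?divr_ge0 ?ltW.
Qed.

Lemma move_prob_gt0_ET B u v e :
  inET (B, u, v) -> e \notin B -> 0 < move_prob n (B, u, v) e.
Proof. by rewrite /move_prob => -> ->; rewrite invr_gt0 ltr0n. Qed.

Lemma move_prob_gt0_deg3 B u v e : u != v -> deg B u = 3%N -> deg B v = 3%N ->
  e \in B -> 0 < move_prob n (B, u, v) e.
Proof.
move=> uv du dv eB; rewrite /move_prob.
have -> : inET (B, u, v) = false by rewrite /inET (negPf uv) du dv.
rewrite /inTheta /inD uv du dv /=.
case: (comp_has_bridge B u) => /=; last by rewrite invr_gt0 ltr0n.
by case: ifP => _; [rewrite divr_gt0 | rewrite eB invr_gt0].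
Qed.

Let sum_weighted_ge0 (I : finType) (P : pred I) (b : I -> bool) (m : I -> R) :
  (forall j, 0 <= m j) -> 0 <= \sum_(j | P j) (b j)%:R * m j.
Proof. by move=> m_ge0; rewrite sumr_ge0 // => j _; rewrite mulr_ge0 ?ler0n. Qed.

Let sum_weighted_gt0 (I : finType) (P : pred I) (b : I -> bool) (m : I -> R) i :
  (forall j, 0 <= m j) -> P i -> b i -> 0 < m i -> 0 < \sum_(j | P j) (b j)%:R * m j.
Proof.
by move=> m_ge0 Pi bi mi; rewrite (bigD1 i) //= bi mul1r ltr_wpDr ?sum_weighted_ge0.
Qed.

Lemma step_move_u B u v u' B' : inR adj (B, u, v) -> inR adj (B', u', v) ->
  adj u u' -> symdiff1 B [set u; u'] = B' -> 0 < move_prob n (B, u, v) [set u; u'] ->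
  step adj n (B, u, v) (B', u', v).
Proof.
move=> s_in t_in huu' sd mp; apply/and3P; split=> //; rewrite /P -sd.
apply: ltr_wpDr; first exact: sum_weighted_ge0 (fun _ => move_prob_ge0 _ _).
by apply: (sum_weighted_gt0 (fun _ => move_prob_ge0 _ _) huu') => //=.
Qed.

Lemma step_move_v B u v v' B' : inR adj (B, u, v) -> inR adj (B', u, v') ->
  adj v v' -> symdiff1 B [set v; v'] = B' -> 0 < move_prob n (B, u, v) [set v; v'] ->
  step adj n (B, u, v) (B', u, v').
Proof.
move=> s_in t_in hvv' sd mp; apply/and3P; split=> //; rewrite /P -sd.
apply: ltr_wpDl; first exact: sum_weighted_ge0 (fun _ => move_prob_ge0 _ _).
by apply: (sum_weighted_gt0 (fun _ => move_prob_ge0 _ _) hvv') => //=.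
Qed.

End Transitions.

Section TwoFactor.
Variables (T : finType) (adj : rel T).
Hypotheses (adj_sym : symmetric adj) (adj_irr : irreflexive adj) (adj_cubic : cubic adj).
Variable A : {set {set T}}.
Hypothesis A_factor : two_factor adj A.
Implicit Types (u v w : T).

Lemma adj_neq u v : adj u v -> u != v.
Proof. by apply: contraTneq => ->; rewrite adj_irr. Qed.

Lemma set2_inj w : {in [pred y | w != y] &, injective (fun y => [set w; y])}.
Proof.
move=> y1 y2 wy1 _ eq12; have : y1 \in [set w; y2] by rewrite -eq12 !inE eqxx orbT.
by rewrite !inE eq_sym (negPf wy1) => /eqP.
Qed.

Lemma exists_nonfactor_edge w : exists2 w', adj w w' & [set w; w'] \notin A.
Proof.
apply/exists_inP; apply: contraT; rewrite negb_exists_in => /forall_inP all_in.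
have : #|[set [set w; y] | y in [set y | adj w y]]| <= deg A w.
  apply/subset_leq_card/subsetP=> e /imsetP[y]; rewrite inE => wy ->.
  by rewrite !inE -[_ \in A]negbK all_in // eqxx.
rewrite card_in_imset ?adj_cubic ?A_factor.2 // => y1 y2; rewrite !inE => wy1 wy2.
by apply: set2_inj; rewrite inE adj_neq.
Qed.

Lemma edge_at w e : e \in edges adj -> w \in e -> exists2 y, adj w y & e = [set w; y].
Proof.
case/imset2P=> a b _; rewrite inE => ab ->; rewrite !inE => /orP[] /eqP->.
  by exists b.
by exists a; [rewrite adj_sym | rewrite setUC].
Qed.

Lemma nonfactor_edge_unique w y1 y2 : adj w y1 -> adj w y2 ->
  [set w; y1] \notin A -> [set w; y2] \notin A -> y1 = y2.
Proof.
move=> wy1 wy2 y1A y2A; apply: contraTeq isT => y12.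
pose N := [set y | adj w y] :\ y1 :\ y2.
have card_N : #|N| = 1.
  have := adj_cubic w; rewrite (cardsD1 y1) (cardsD1 y2 (_ :\ y1)) !inE wy1 wy2 eq_sym y12.
  by case.
have : deg A w <= #|[set [set w; y] | y in N]|.
  apply/subset_leq_card/subsetP=> e; rewrite inE => /andP[eA we].
  have [y wy def_e] := edge_at (subsetP A_factor.1 e eA) we.
  apply/imsetP; exists y => //; rewrite !inE wy andbT.
  by apply/andP; split; apply: contraTneq eA => y_eq; rewrite def_e y_eq.
by move/leq_trans/(_ (leq_imset_card _ _)); rewrite A_factor.2 card_N.
Qed.

End TwoFactor.

(* Decides every test [a == b] in the goal from the disequalities in context,
   case-splitting on the remaining ones. *)
Ltac decide_eq_tests :=
  repeat (rewrite ?eqxx; match goal with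
  | H : is_true (?a != ?b) |- context [?a == ?b] => rewrite (negPf H)
  | H : is_true (?a != ?b) |- context [?b == ?a] => rewrite (eq_sym b a) (negPf H)
  | |- context [?a == ?b] =>
      let E := fresh in destruct (eqVneq a b) as [E|?]; [try rewrite E|]
  end).

Section Walks.
Variables (T : finType) (adj : rel T).
Hypotheses (adj_sym : symmetric adj) (adj_irr : irreflexive adj) (adj_cubic : cubic adj).
Variables (R : realFieldType) (n : R).
Hypothesis n_pos : (0 < n)%R.
Variable A : {set {set T}}.
Hypothesis A_factor : two_factor adj A.
Implicit Types (u v w x z : T).

Local Notation step := (step adj n).

Lemma inR_factor u : inR adj (A, u, u).
Proof. exact: inR_diag A_factor.1 A_factor.2. Qed.

Lemma deg_add_nonfactor e w : e \notin A -> deg (e |: A) w = 2 + (w \in e).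
Proof. by move=> eA; rewrite deg_setU1 // A_factor.2. Qed.

Lemma inR_add_nonfactor u w : adj u w -> [set u; w] \notin A ->
  inR adj ([set u; w] |: A, u, w).
Proof.
move=> uw uwA; have uw_neq := adj_neq adj_irr uw.
apply: (inR_pair (du := 3) (dv := 3)) => //.
- by rewrite subUset sub1set edge_in_edges // A_factor.1.
- by rewrite deg_add_nonfactor // !inE eqxx.
- by rewrite deg_add_nonfactor // !inE eqxx orbT.
- by move=> y yu yw; rewrite deg_add_nonfactor // !inE (negPf yu) (negPf yw).
Qed.

Lemma inR_open_defect x x' : adj x x' -> [set x; x'] \notin A ->
  inR adj ([set x; x'] |: A, x', x).
Proof.
by move=> xx' xx'A; rewrite [[set x; x']]setUC inR_add_nonfactor // 1?adj_sym // setUC.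
Qed.

Lemma open_defect x x' : adj x x' -> [set x; x'] \notin A ->
  step (A, x, x) ([set x; x'] |: A, x', x).
Proof.
move=> xx' xx'A; apply: step_move_u => //.
- exact: inR_factor.
- exact: inR_open_defect.
- by rewrite /symdiff1 (negPf xx'A).
- by rewrite move_prob_gt0_ET //= eqxx.
Qed.

Lemma close_defect u w : adj u w -> [set u; w] \notin A ->
  step ([set u; w] |: A, u, w) (A, u, u).
Proof.
move=> uw uwA; have uw_neq := adj_neq adj_irr uw.
apply: step_move_v; rewrite 1?adj_sym //.
- exact: inR_add_nonfactor.
- exact: inR_factor.
- by rewrite [[set w; u]]setUC /symdiff1 setU11 setU1K.
- rewrite [[set w; u]]setUC move_prob_gt0_deg3 ?setU11 //.
  all: by rewrite deg_add_nonfactor // !inE eqxx ?orbT.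
Qed.

Lemma connect_nonfactor_edge x x' : adj x x' -> [set x; x'] \notin A ->
  connect step (A, x, x) (A, x', x').
Proof.
move=> xx' xx'A; apply: connect_trans (connect1 (open_defect xx' xx'A)) _.
by apply: connect1; rewrite [[set x; x']]setUC close_defect // 1?adj_sym // setUC.
Qed.

Section FactorEdgeWalk.
Variables x z x' z' : T.
Hypotheses (adj_xz : adj x z) (adj_xx' : adj x x') (adj_zz' : adj z z').
Hypotheses (xz_in : [set x; z] \in A) (xx'_notin : [set x; x'] \notin A)
  (zz'_notin : [set z; z'] \notin A).
Hypotheses (x_neq_x' : x != x') (x_neq_z : x != z) (x_neq_z' : x != z')
  (x'_neq_z : x' != z) (x'_neq_z' : x' != z') (z_neq_z' : z != z').

Local Notation xx' := [set x; x'].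
Local Notation xz := [set x; z].
Local Notation zz' := [set z; z'].
Local Notation B1 := (xx' |: A).
Local Notation B2 := (B1 :\ xz).
Local Notation B3 := (zz' |: B2).
Local Notation B4 := (B3 :\ xx').

Let xx'_neq_xz : xx' != xz. Proof. by apply: contraNneq xx'_notin => ->. Qed.
Let zz'_neq_xz : zz' != xz. Proof. by apply: contraNneq zz'_notin => ->. Qed.
Let zz'_neq_xx' : zz' != xx'.
Proof. by apply: contraTneq (setU11 z [set z']) => ->; rewrite !inE; decide_eq_tests. Qed.

Lemma deg_B2 w : deg B2 w = 2 + (w \in xx') - (w \in xz).
Proof. by rewrite deg_setD1 ?deg_add_nonfactor // setU1r. Qed.

Lemma deg_B3 w : deg B3 w = 2 + (w \in xx') - (w \in xz) + (w \in zz').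
Proof. by rewrite deg_setU1 ?deg_B2 // !inE; decide_eq_tests. Qed.

Lemma deg_B4 w : deg B4 w = 2 + (w \in xx') - (w \in xz) + (w \in zz') - (w \in xx').
Proof. by rewrite deg_setD1 ?deg_B3 // !inE; decide_eq_tests. Qed.

Let B1_sub : B1 \subset edges adj.
Proof. by rewrite subUset sub1set edge_in_edges // A_factor.1. Qed.
Let B3_sub : B3 \subset edges adj.
Proof. by rewrite subUset sub1set edge_in_edges // (subset_trans (subD1set _ _)). Qed.

Lemma inR_B2 : inR adj (B2, x', z).
Proof.
apply: (inR_pair (du := 3) (dv := 1)) => //; first exact: subset_trans (subD1set _ _) _.
all: try move=> w ? ?; by rewrite deg_B2 !inE; decide_eq_tests.
Qed.

Lemma inR_B3 : inR adj (B3, x', z').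
Proof.
apply: (inR_pair (du := 3) (dv := 3)) => //.
all: try move=> w ? ?; by rewrite deg_B3 !inE; decide_eq_tests.
Qed.

Lemma inR_B4 : inR adj (B4, x, z').
Proof.
apply: (inR_pair (du := 1) (dv := 3)) => //; first exact: subset_trans (subD1set _ _) _.
all: try move=> w ? ?; by rewrite deg_B4 !inE; decide_eq_tests.
Qed.

Lemma step_B1_B2 : step (B1, x', x) (B2, x', z).
Proof.
apply: step_move_v => //; first exact: inR_open_defect.
- exact: inR_B2.
- by rewrite /symdiff1 setU1r.
- rewrite move_prob_gt0_deg3 ?setU1r // ?deg_add_nonfactor //.
  all: by rewrite ?inE; decide_eq_tests.
Qed.

Lemma step_B2_B3 : step (B2, x', z) (B3, x', z').
Proof.
have zz'_notin_B2 : zz' \notin B2 by rewrite !inE; decide_eq_tests.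
apply: step_move_v => //; first exact: inR_B2.
- exact: inR_B3.
- by rewrite /symdiff1 (negPf zz'_notin_B2).
- by rewrite move_prob_gt0_ET //= !deg_B2 !inE; decide_eq_tests.
Qed.

Lemma step_B3_B4 : step (B3, x', z') (B4, x, z').
Proof.
have xx'_in_B3 : xx' \in B3 by rewrite !inE; decide_eq_tests.
apply: step_move_u; rewrite 1?adj_sym //.
- exact: inR_B3.
- exact: inR_B4.
- by rewrite [[set x'; x]]setUC /symdiff1 xx'_in_B3.
- rewrite [[set x'; x]]setUC move_prob_gt0_deg3 //.
  all: by rewrite ?deg_B3 ?inE; decide_eq_tests.
Qed.

Lemma B5_eq : xz |: B4 = zz' |: A.
Proof.
apply/setP=> e; rewrite !inE; decide_eq_tests.
all: by rewrite ?xz_in ?(negPf xx'_notin).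
Qed.

Lemma step_B4_B5 : step (B4, x, z') (zz' |: A, z, z').
Proof.
have xz_notin_B4 : xz \notin B4 by rewrite !inE; decide_eq_tests.
apply: step_move_u => //; first exact: inR_B4.
- exact: inR_add_nonfactor.
- by rewrite /symdiff1 (negPf xz_notin_B4) B5_eq.
- by rewrite move_prob_gt0_ET //= !deg_B4 !inE; decide_eq_tests.
Qed.

Lemma connect_factor_walk : connect step (A, x, x) (A, z, z).
Proof.
apply/connectP; exists [:: (B1, x', x); (B2, x', z); (B3, x', z'); (B4, x, z');
  (zz' |: A, z, z'); (A, z, z)] => //=.
by rewrite open_defect // step_B1_B2 step_B2_B3 step_B3_B4 step_B4_B5 close_defect.
Qed.

End FactorEdgeWalk.

Lemma connect_factor_edge x z : adj x z -> [set x; z] \in A ->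
  connect step (A, x, x) (A, z, z).
Proof.
move=> xz xz_in.
have [x' xx' xx'_notin] := exists_nonfactor_edge adj_irr adj_cubic A_factor x.
have [z' zz' zz'_notin] := exists_nonfactor_edge adj_irr adj_cubic A_factor z.
apply: (connect_factor_walk xz xx' zz') => //; try exact: adj_neq.
- by apply: contraNneq zz'_notin => <-; rewrite setUC.
- by apply: contraNneq xx'_notin => ->.
- apply: contraNneq (adj_neq adj_irr xz) => x'_eq_z'; apply/eqP.
  apply: (nonfactor_edge_unique adj_sym adj_cubic A_factor (w := x')).
  + by rewrite adj_sym.
  + by rewrite x'_eq_z' adj_sym.
  + by rewrite setUC.
  + by rewrite x'_eq_z' setUC.
Qed.

Lemma connect_adj x y : adj x y -> connect step (A, x, x) (A, y, y).
Proof.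
move=> xy; have [xy_in | xy_notin] := boolP ([set x; y] \in A).
  exact: connect_factor_edge.
exact: connect_nonfactor_edge.
Qed.

Lemma connect_lift x y : connect adj x y -> connect step (A, x, x) (A, y, y).
Proof.
case/connectP=> p; elim: p x => [|y' p IHp] x /=; first by move=> _ ->.
by case/andP=> xy' y'p /(IHp _ y'p); apply: connect_trans (connect_adj xy').
Qed.

End Walks.

Theorem lemma2 (T : finType) (adj : rel T)
  (adj_sym : symmetric adj) (adj_irr : irreflexive adj)
  (Hcubic : cubic adj) (Hconn : connected_graph adj) (Hbip : bipartite adj)
  (R : realFieldType) (n : R) (n_pos : (0 < n)%R)
  (A : {set {set T}}) (HA : two_factor adj A) (x y : T) :
  connect (step adj n) (A, x, x) (A, y, y) /\ connect (step adj n) (A, y, y) (A, x, x).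
Proof. by split; apply: connect_lift. Qed.
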